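(* Let $G$ be a connected graph and $r\in\mathbb{N}$. Then the $r$-local covering $p_r:G_r\to G$ preserves $(r/2)$-balls.
   Context: Graphs may have loops and parallel edges and are viewed as 1-complexes; a cycle may be a loop or a pair of parallel edges; a closed walk once around a cycle $O$ traverses every edge of $O$ exactly once. $\pi_1^r(G,x_0)$ is the subgroup of $\pi_1(G,x_0)$ generated by the classes of the closed walks $W_0QW_0^-$, with $W_0$ a walk from $x_0$ to a vertex $y$, $Q$ a closed walk at $y$ once around a cycle of length at most $r$, $W_0^-$ the reverse of $W_0$. The $r$-local covering $p_r:G_r\to G$ is the connected normal covering with characteristic subgroup $\pi_1^r(G,x_0)$. For $\varrho\in\mathbb{N}$ and a vertex $v$ of a graph $X$, the ball $B_X(v,\varrho/2)$ is the subgraph formed by the vertices at distance at most $\varrho/2$ from $v$ and all edges $xy$ with $d_X(v,x)+1+d_X(y,v)\le\varrho$. A covering $p:C\to G$ preserves $(\varrho/2)$-balls if for every vertex $v$ of $G$ and every lift $\hat v$ of $v$, $p$ maps $B_C(\hat v,\varrho/2)$ isomorphically onto $B_G(v,\varrho/2)$. *)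

(* Graphs with loops and parallel edges, encoded by darts
   (oriented edges): each edge {d, rv d} has two distinct orientations;
   a loop is an edge whose two darts have the same tail. *)
From Stdlib Require Import List Arith Relations.
Import ListNotations.

Record graph := mkGraph {
  vert : Type;
  dart : Type;
  tl : dart -> vert;
  rv : dart -> dart;
  rv_invol : forall d, rv (rv d) = d;
  rv_nofix : forall d, rv d <> d }.

Arguments tl {g} d.
Arguments rv {g} d.

Definition hd {G : graph} (d : dart G) : vert G := tl (rv d).

Fixpoint is_walk {G : graph} (x : vert G) (w : list (dart G)) (y : vert G) : Prop :=
  match w with
  | [] => x = y
  | d :: w' => tl d = x /\ is_walk (hd d) w' y
  end.

Definition rev_walk {G : graph} (w : list (dart G)) : list (dart G) :=
  rev (map rv w).

Definition connected (G : graph) : Prop :=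
  forall x y : vert G, exists w, is_walk x w y.

Definition bt_step {G : graph} (x y : vert G) (w w' : list (dart G)) : Prop :=
  is_walk x w y /\ is_walk x w' y /\
  exists a b d, w = a ++ d :: rv d :: b /\ w' = a ++ b.

Definition homotopic {G : graph} (x y : vert G) : relation (list (dart G)) :=
  clos_refl_sym_trans _ (@bt_step G x y).

(* Q is a closed walk once around a cycle: nonempty closed walk whose
   vertices are pairwise distinct and whose edges are pairwise distinct
   (length 1: a loop; length 2: a pair of parallel edges; length >= 3: a cycle). *)
Definition once_around_cycle {G : graph} (Q : list (dart G)) : Prop :=
  Q <> [] /\
  (exists x, is_walk x Q x) /\
  NoDup (map tl Q) /\
  (forall i j di dj, i <> j -> nth_error Q i = Some di -> nth_error Q j = Some dj ->
     di <> dj /\ di <> rv dj).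

Definition pi1r_generator (G : graph) (r : nat) (x0 : vert G) (g : list (dart G)) : Prop :=
  exists (W0 Q : list (dart G)) (y : vert G),
    is_walk x0 W0 y /\ is_walk y Q y /\ once_around_cycle Q /\ length Q <= r /\
    g = W0 ++ Q ++ rev_walk W0.

Definition in_pi1r (G : graph) (r : nat) (x0 : vert G) (W : list (dart G)) : Prop :=
  is_walk x0 W x0 /\
  exists gs : list (list (dart G)),
    Forall (fun g => pi1r_generator G r x0 g \/ pi1r_generator G r x0 (rev_walk g)) gs /\
    homotopic x0 x0 W (concat gs).

Record covering (C G : graph) := mkCovering {
  cv : vert C -> vert G;
  cd : dart C -> dart G;
  cov_tl : forall d, tl (cd d) = cv (tl d);
  cov_rv : forall d, cd (rv d) = rv (cd d);
  cov_surj : forall x, exists c, cv c = x;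
  cov_local : forall (c : vert C) (e : dart G), tl e = cv c ->
      exists d, (tl d = c /\ cd d = e) /\
                (forall d', tl d' = c /\ cd d' = e -> d' = d) }.

Arguments cv {_ _} _ _.
Arguments cd {_ _} _ _.

(* Ball B_X(v, rho/2): vertices x with d(v,x) <= rho/2, and edges xy (dart d
   with tail x, head y) with d(v,x) + 1 + d(y,v) <= rho. *)
Definition ball_vert {X : graph} (v : vert X) (rho : nat) (x : vert X) : Prop :=
  exists w, is_walk v w x /\ 2 * length w <= rho.

Definition ball_dart {X : graph} (v : vert X) (rho : nat) (d : dart X) : Prop :=
  exists a b, is_walk v a (tl d) /\ is_walk (hd d) b v /\
              length a + 1 + length b <= rho.

(* p maps B_C(vh, rho/2) isomorphically onto B_G(v, rho/2) (p being a graph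
   homomorphism, this means: bijectively on vertices and on darts). *)
Definition ball_iso {C G : graph} (p : covering C G) (rho : nat)
    (v : vert G) (vh : vert C) : Prop :=
  (forall x, ball_vert vh rho x -> ball_vert v rho (cv p x)) /\
  (forall x y, ball_vert vh rho x -> ball_vert vh rho y -> cv p x = cv p y -> x = y) /\
  (forall y, ball_vert v rho y -> exists x, ball_vert vh rho x /\ cv p x = y) /\
  (forall d, ball_dart vh rho d -> ball_dart v rho (cd p d)) /\
  (forall d e, ball_dart vh rho d -> ball_dart vh rho e -> cd p d = cd p e -> d = e) /\
  (forall e, ball_dart v rho e -> exists d, ball_dart vh rho d /\ cd p d = e).

Definition preserves_balls {C G : graph} (p : covering C G) (rho : nat) : Prop :=
  forall (v : vert G) (vh : vert C), cv p vh = v -> ball_iso p rho v vh.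

Definition char_subgroup_is_pi1r {C G : graph} (p : covering C G) (c0 : vert C)
    (x0 : vert G) (r : nat) : Prop :=
  forall W, is_walk x0 W x0 ->
    (in_pi1r G r x0 W <->
     exists Wh, is_walk c0 Wh c0 /\ homotopic x0 x0 (map (cd p) Wh) W).

(* A closed walk of length at most r is, up to homotopy and conjugation, a
   product of conjugates of cycles of length at most r: cancel a backtrack
   (possibly across the base point), or split the walk at a repeated vertex
   into two shorter closed walks.  Conjugated by the image of a path in C from
   c0, such a walk therefore lies in pi_1^r = p_* pi_1(C, c0), so it lifts to a
   closed walk at every lift of its base point.  Hence two walks from a lift of
   v of total length at most r whose ends have the same image end at the same
   vertex, which is injectivity on the balls; surjectivity comes from lifting
   walks. *)

From Pilot Require Import Defs.
From Stdlib Require Import List Arith Relations Lia Classical Wf_nat.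
Import ListNotations.
Local Notation hd := Defs.hd.
Local Notation tl := Defs.tl.

Lemma not_NoDup_map_split {A B} (f : A -> B) (l : list A) :
  ~ NoDup (map f l) ->
  exists l1 a l2 b l3, l = l1 ++ a :: l2 ++ b :: l3 /\ f a = f b.
Proof.
  induction l as [|a l IH]; simpl; intros Hdup.
  - exfalso. apply Hdup. constructor.
  - destruct (classic (In (f a) (map f l))) as [Hin | Hnin].
    + apply in_map_iff in Hin as [b [Eb Hb]].
      apply in_split in Hb as [l2 [l3 ->]].
      now exists [], a, l2, b, l3.
    + destruct IH as [l1 [a' [l2 [b [l3 [-> E]]]]]].
      * intros Hnd. apply Hdup. now constructor.
      * now exists (a :: l1), a', l2, b, l3.
Qed.

Section Walks.
Context {G : graph}.
Implicit Types (x y m : vert G) (d : dart G) (a b u v w U W : list (dart G)).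

Lemma hd_rv d : hd (rv d) = tl d.
Proof. unfold hd. now rewrite rv_invol. Qed.

Lemma is_walk_app u v x z :
  is_walk x (u ++ v) z <-> exists y, is_walk x u y /\ is_walk y v z.
Proof.
  revert x. induction u as [|d u IH]; intros x; simpl.
  - split; [intros H; now exists x | now intros [y [-> H]]].
  - rewrite IH. split.
    + intros [Hd [y Hy]]. now exists y.
    + intros [y [[Hd Hu] Hv]]. split; [|exists y]; auto.
Qed.

Lemma is_walk_app3 x y x' y' a w b :
  is_walk x' a x -> is_walk x w y -> is_walk y b y' -> is_walk x' (a ++ w ++ b) y'.
Proof.
  intros Ha Hw Hb. apply is_walk_app. exists x. split; [exact Ha|].
  apply is_walk_app. now exists y.
Qed.

Lemma is_walk_target_unique w x y1 y2 :
  is_walk x w y1 -> is_walk x w y2 -> y1 = y2.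
Proof.
  revert x. induction w as [|d w IH]; simpl; intros x.
  - congruence.
  - intros [_ H1] [_ H2]. eauto.
Qed.

Lemma is_walk_rev_walk w x y : is_walk x w y -> is_walk y (rev_walk w) x.
Proof.
  revert x. induction w as [|d w IH]; simpl; intros x.
  - now intros ->.
  - intros [<- Hw]. unfold rev_walk. simpl. apply is_walk_app. exists (hd d).
    split; [now apply IH|].
    simpl. split; [reflexivity | apply hd_rv].
Qed.

Lemma rev_walk_involutive w : rev_walk (rev_walk w) = w.
Proof.
  unfold rev_walk. rewrite map_rev, rev_involutive, map_map.
  rewrite <- (map_id w) at 2. apply map_ext. apply rv_invol.
Qed.

Lemma length_rev_walk w : length (rev_walk w) = length w.
Proof. unfold rev_walk. now rewrite length_rev, length_map. Qed.

Lemma rev_walk_app u v : rev_walk (u ++ v) = rev_walk v ++ rev_walk u.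
Proof. unfold rev_walk. now rewrite map_app, rev_app_distr. Qed.

Lemma is_walk_cancel_backtrack x y a d b :
  is_walk x (a ++ d :: rv d :: b) y -> is_walk x (a ++ b) y.
Proof.
  intros Hw. apply is_walk_app in Hw as [m [Ha [Hd [_ Hb]]]].
  apply is_walk_app. exists m. split; [exact Ha|]. now rewrite hd_rv, Hd in Hb.
Qed.

Definition conj_walk U W := U ++ W ++ rev_walk U.

Lemma is_walk_conj_walk x y U W :
  is_walk x U y -> is_walk y W y -> is_walk x (conj_walk U W) x.
Proof.
  intros HU HW. apply is_walk_app3 with y y; [exact HU | exact HW |].
  now apply is_walk_rev_walk.
Qed.

Lemma conj_walk_cyclic_backtrack U d W :
  conj_walk U (d :: W ++ [rv d]) = conj_walk (U ++ [d]) W.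
Proof.
  unfold conj_walk. rewrite rev_walk_app, <- !app_assoc. simpl.
  now rewrite <- app_assoc.
Qed.

Lemma homotopic_is_walk x y w w' :
  homotopic x y w w' -> is_walk x w y <-> is_walk x w' y.
Proof. induction 1 as [w w' [Hw [Hw' _]]| | |]; tauto. Qed.

Lemma homotopic_backtrack x y a d b :
  is_walk x (a ++ d :: rv d :: b) y ->
  homotopic x y (a ++ d :: rv d :: b) (a ++ b).
Proof.
  intros Hw. apply rst_step. split; [exact Hw|].
  split; [now apply is_walk_cancel_backtrack with d | now exists a, b, d].
Qed.

Lemma homotopic_app_cong x y x' y' w w' a b :
  homotopic x y w w' -> is_walk x' a x -> is_walk y b y' ->
  homotopic x' y' (a ++ w ++ b) (a ++ w' ++ b).
Proof.
  intros H Ha Hb.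
  induction H as [w w' [Hw [Hw' [a0 [b0 [d [-> ->]]]]]]| | |].
  - apply rst_step. split; [|split].
    + now apply is_walk_app3 with x y.
    + now apply is_walk_app3 with x y.
    + exists (a ++ a0), (b0 ++ b), d. split; now rewrite <- !app_assoc.
  - apply rst_refl.
  - now apply rst_sym.
  - eapply rst_trans; eauto.
Qed.

Lemma homotopic_conj_walk_cong x y U W W' :
  is_walk x U y -> homotopic y y W W' ->
  homotopic x x (conj_walk U W) (conj_walk U W').
Proof.
  intros HU H. apply homotopic_app_cong with y y; [exact H | exact HU |].
  now apply is_walk_rev_walk.
Qed.

Lemma homotopic_app_rev_walk_nil x y U :
  is_walk x U y -> homotopic x x (U ++ rev_walk U) [].
Proof.
  revert x. induction U as [|d U IH]; intros x HU.
  - apply rst_refl.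
  - destruct HU as [<- HU].
    replace ((d :: U) ++ rev_walk (d :: U)) with (conj_walk [d] (U ++ rev_walk U))
      by (unfold conj_walk, rev_walk; simpl; now rewrite <- !app_assoc).
    apply rst_trans with (conj_walk [d] []).
    + apply homotopic_conj_walk_cong with (hd d); [now split | now apply IH].
    + apply (homotopic_backtrack _ _ [] d []). simpl. now rewrite hd_rv.
Qed.

Lemma homotopic_conj_walk_split x y m U W1 W2 W3 :
  is_walk x U y -> is_walk y W1 m -> is_walk m W2 m -> is_walk m W3 y ->
  homotopic x x (conj_walk U (W1 ++ W2 ++ W3))
                (conj_walk (U ++ W1) W2 ++ conj_walk U (W1 ++ W3)).
Proof.
  intros HU HW1 HW2 HW3.
  assert (HUW1 : is_walk x (U ++ W1) m) by (apply is_walk_app; now exists y).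
  replace (conj_walk U (W1 ++ W2 ++ W3))
    with ((U ++ W1 ++ W2) ++ [] ++ (W3 ++ rev_walk U))
    by (unfold conj_walk; now rewrite <- !app_assoc).
  replace (conj_walk (U ++ W1) W2 ++ conj_walk U (W1 ++ W3))
    with ((U ++ W1 ++ W2) ++ (rev_walk (U ++ W1) ++ rev_walk (rev_walk (U ++ W1)))
          ++ (W3 ++ rev_walk U))
    by (unfold conj_walk; rewrite rev_walk_involutive; now rewrite <- !app_assoc).
  apply rst_sym, homotopic_app_cong with m m.
  - apply homotopic_app_rev_walk_nil with x. now apply is_walk_rev_walk.
  - rewrite app_assoc. apply is_walk_app. now exists m.
  - apply is_walk_app. exists y. split; [exact HW3 | now apply is_walk_rev_walk].
Qed.

Lemma nth_error_tl_inj W i j di dj :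
  NoDup (map tl W) -> nth_error W i = Some di -> nth_error W j = Some dj ->
  tl di = tl dj -> i = j.
Proof.
  intros Hnd Hi Hj Ht. apply (proj1 (NoDup_nth_error _) Hnd).
  - rewrite length_map. apply nth_error_Some. congruence.
  - rewrite !nth_error_map, Hi, Hj. simpl. congruence.
Qed.

(* In a closed walk with distinct tails, a dart and its reverse can only be
   consecutive, possibly across the base point. *)
Lemma once_around_cycle_intro y W :
  is_walk y W y -> W <> [] -> NoDup (map tl W) ->
  (forall a d b, W <> a ++ d :: rv d :: b) ->
  (forall d W', W <> d :: W' ++ [rv d]) ->
  once_around_cycle W.
Proof.
  intros Hw Hne Hnd Hbt Hcyc. split; [exact Hne | split; [now exists y | split; [exact Hnd|]]].
  intros i j di dj Hij Hi Hj. split.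
  { intros ->. apply Hij. now apply nth_error_tl_inj with W dj dj. }
  intros ->.
  destruct (nth_error_split W j Hj) as [A [B [-> HA]]].
  apply is_walk_app in Hw as [m [HA_walk [_ Hw]]].
  destruct B as [|e B].
  - destruct A as [|d0 A]; simpl in HA; subst j.
    + destruct i as [|[|i]]; [congruence | discriminate | discriminate].
    + destruct HA_walk as [Hd0 _].
      assert (i = 0).
      { apply nth_error_tl_inj with (d0 :: A ++ [dj]) (rv dj) d0;
          [exact Hnd | exact Hi | reflexivity |].
        change (hd dj = tl d0). now rewrite Hd0. }
      subst i. injection Hi as Hi.
      apply (Hcyc d0 A). now rewrite Hi, rv_invol.
  - assert (He : nth_error (A ++ dj :: e :: B) (S j) = Some e).
    { rewrite nth_error_app2 by lia. now replace (S j - length A) with 1 by lia. }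
    assert (i = S j).
    { apply nth_error_tl_inj with (A ++ dj :: e :: B) (rv dj) e;
        [exact Hnd | exact Hi | exact He | now destruct Hw]. }
    subst i. rewrite He in Hi. injection Hi as ->.
    now apply (Hbt A dj B).
Qed.

End Walks.

Ltac length_lia := repeat progress (cbn [length] in *; rewrite ?length_app in * ); lia.

Section Pi1r.
Context (G : graph) (r : nat) (x0 : vert G).

Lemma in_pi1r_homotopic W W' :
  homotopic x0 x0 W W' -> in_pi1r G r x0 W' -> in_pi1r G r x0 W.
Proof.
  intros H [HW' [gs [Hgs Hh]]]. split.
  - now apply (homotopic_is_walk _ _ _ _ H).
  - exists gs. split; [exact Hgs | eapply rst_trans; eauto].
Qed.

Lemma in_pi1r_app W1 W2 :
  in_pi1r G r x0 W1 -> in_pi1r G r x0 W2 -> in_pi1r G r x0 (W1 ++ W2).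
Proof.
  intros [H1 [gs1 [F1 K1]]] [H2 [gs2 [F2 K2]]]. split.
  - apply is_walk_app. now exists x0.
  - exists (gs1 ++ gs2). split; [now apply Forall_app|]. rewrite concat_app.
    assert (Hc1 : is_walk x0 (concat gs1) x0)
      by now apply (homotopic_is_walk _ _ _ _ K1).
    apply rst_trans with (concat gs1 ++ W2).
    + exact (homotopic_app_cong _ _ _ _ _ _ [] W2 K1 eq_refl H2).
    + pose proof (homotopic_app_cong _ _ _ _ _ _ (concat gs1) [] K2 Hc1 eq_refl) as H.
      now rewrite !app_nil_r in H.
Qed.

Lemma in_pi1r_conj_walk_nil y U : is_walk x0 U y -> in_pi1r G r x0 (conj_walk U []).
Proof.
  intros HU. split; [now apply is_walk_conj_walk with y|].
  exists []. split; [constructor | exact (homotopic_app_rev_walk_nil x0 y U HU)].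
Qed.

Lemma in_pi1r_conj_walk_cycle y U Q :
  is_walk x0 U y -> is_walk y Q y -> once_around_cycle Q -> length Q <= r ->
  in_pi1r G r x0 (conj_walk U Q).
Proof.
  intros HU HQ Hcyc Hr. split; [now apply is_walk_conj_walk with y|].
  exists [conj_walk U Q]. split.
  - apply Forall_cons; [left | constructor].
    now exists U, Q, y.
  - simpl. rewrite app_nil_r. apply rst_refl.
Qed.

Lemma in_pi1r_conj_short_closed_walk W : forall y U,
  is_walk y W y -> is_walk x0 U y -> length W <= r ->
  in_pi1r G r x0 (conj_walk U W).
Proof.
  induction W as [W IH] using (induction_ltof1 _ (@length _)); unfold ltof in IH.
  intros y U HW HU Hr.
  destruct (classic (W = [])) as [-> | Hne].
  { now apply in_pi1r_conj_walk_nil with y. }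
  destruct (classic (exists a d b, W = a ++ d :: rv d :: b)) as [[a [d [b ->]]] | Hbt].
  { apply in_pi1r_homotopic with (conj_walk U (a ++ b)).
    - apply homotopic_conj_walk_cong with y; [exact HU | now apply homotopic_backtrack].
    - apply IH with y; [| now apply is_walk_cancel_backtrack with d | exact HU |];
        length_lia. }
  destruct (classic (exists d W', W = d :: W' ++ [rv d])) as [[d [W' ->]] | Hcyc].
  { rewrite conj_walk_cyclic_backtrack.
    destruct HW as [Hd HW]. apply is_walk_app in HW as [m [HW [Hm Hy]]].
    simpl in Hy. rewrite hd_rv in Hy. subst y m.
    apply IH with (hd d); [length_lia | exact HW | | length_lia].
    apply is_walk_app. exists (tl d). now split. }
  destruct (classic (NoDup (map tl W))) as [Hnd | Hdup].
  { apply in_pi1r_conj_walk_cycle with y; try assumption.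
    apply once_around_cycle_intro with y; try assumption.
    - intros a d b E. apply Hbt. now exists a, d, b.
    - intros d W' E. apply Hcyc. now exists d, W'. }
  destruct (not_NoDup_map_split tl W Hdup) as [W1 [d1 [W2 [d2 [W3 [-> Ht]]]]]].
  apply is_walk_app in HW as [m [HW1 HW23]].
  change (is_walk m ((d1 :: W2) ++ d2 :: W3) y) in HW23.
  apply is_walk_app in HW23 as [m' [HW2 HW3]].
  assert (m' = m) by (destruct HW2 as [<- _], HW3 as [<- _]; auto). subst m'.
  apply in_pi1r_homotopic with
    (conj_walk (U ++ W1) (d1 :: W2) ++ conj_walk U (W1 ++ d2 :: W3)).
  { exact (homotopic_conj_walk_split _ _ _ _ W1 (d1 :: W2) (d2 :: W3) HU HW1 HW2 HW3). }
  apply in_pi1r_app.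
  - apply IH with m; [| exact HW2 | apply is_walk_app; now exists y |]; length_lia.
  - apply IH with y; [| apply is_walk_app; now exists m | exact HU |]; length_lia.
Qed.

End Pi1r.

Section Coverings.
Context {C G : graph} (p : covering C G).
Implicit Types (c : vert C) (d e : dart C) (wh : list (dart C)) (w : list (dart G)).

Lemma cd_hd d : hd (cd p d) = cv p (hd d).
Proof. unfold hd. rewrite <- (cov_rv _ _ p). apply cov_tl. Qed.

Lemma map_cd_rev_walk wh : map (cd p) (rev_walk wh) = rev_walk (map (cd p) wh).
Proof.
  unfold rev_walk. rewrite map_rev, !map_map. f_equal.
  apply map_ext. apply cov_rv.
Qed.

Lemma is_walk_map_cd wh c c' :
  is_walk c wh c' -> is_walk (cv p c) (map (cd p) wh) (cv p c').
Proof.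
  revert c. induction wh as [|d wh IH]; simpl; intros c.
  - now intros ->.
  - intros [<- Hw]. split; [apply cov_tl|]. rewrite cd_hd. now apply IH.
Qed.

Lemma cd_inj_tl d e : tl d = tl e -> cd p d = cd p e -> d = e.
Proof.
  intros Ht Hc. destruct (cov_local _ _ p (tl d) (cd p d)) as [q [_ Hq]]; [apply cov_tl|].
  transitivity q; [|symmetry]; apply Hq; auto.
Qed.

Lemma map_cd_inj_walk wh1 wh2 c c1 c2 :
  is_walk c wh1 c1 -> is_walk c wh2 c2 -> map (cd p) wh1 = map (cd p) wh2 -> wh1 = wh2.
Proof.
  revert wh2 c. induction wh1 as [|d1 wh1 IH]; intros [|d2 wh2] c; simpl;
    try discriminate; [reflexivity|].
  intros [H1 Hw1] [H2 Hw2] E. injection E as Ed E.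
  assert (d1 = d2) as <- by (apply cd_inj_tl; congruence).
  f_equal. now apply IH with (hd d1).
Qed.

Definition lifts_to c w c1 : Prop := exists wh, is_walk c wh c1 /\ map (cd p) wh = w.

Lemma lifts_to_exists c w y :
  is_walk (cv p c) w y -> exists c1, lifts_to c w c1 /\ cv p c1 = y.
Proof.
  revert c. induction w as [|f w IH]; simpl; intros c.
  - intros <-. exists c. split; [now exists [] | reflexivity].
  - intros [Hf Hw].
    destruct (cov_local _ _ p c f Hf) as [d [[Hd Ed] _]].
    rewrite <- Ed, cd_hd in Hw.
    destruct (IH _ Hw) as [c1 [[wh [Hwh Ewh]] Hc1]].
    exists c1. split; [|exact Hc1].
    exists (d :: wh). split; [now split | simpl; congruence].
Qed.

Lemma lifts_to_target_unique c w c1 c2 : lifts_to c w c1 -> lifts_to c w c2 -> c1 = c2.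
Proof.
  intros [wh1 [H1 E1]] [wh2 [H2 E2]].
  assert (wh1 = wh2) as <- by (apply (map_cd_inj_walk _ _ c c1 c2); congruence).
  now apply (is_walk_target_unique wh1 c).
Qed.

Lemma lifts_to_app c u v c2 :
  lifts_to c (u ++ v) c2 <-> exists m, lifts_to c u m /\ lifts_to m v c2.
Proof.
  split.
  - intros [wh [H E]]. apply map_eq_app in E as [wh1 [wh2 [-> [E1 E2]]]].
    apply is_walk_app in H as [m [H1 H2]].
    exists m. split; [now exists wh1 | now exists wh2].
  - intros [m [[wh1 [H1 E1]] [wh2 [H2 E2]]]]. exists (wh1 ++ wh2). split.
    + apply is_walk_app. now exists m.
    + rewrite map_app. congruence.
Qed.

Lemma lifts_to_rev_walk c w c1 : lifts_to c w c1 -> lifts_to c1 (rev_walk w) c.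
Proof.
  intros [wh [H E]]. exists (rev_walk wh). split.
  - now apply is_walk_rev_walk.
  - now rewrite map_cd_rev_walk, E.
Qed.

(* The lift of [rv f] at the head of the lift [d] of [f] is [rv d]. *)
Lemma lifts_to_cancel_backtrack c a f b c1 :
  lifts_to c (a ++ f :: rv f :: b) c1 -> lifts_to c (a ++ b) c1.
Proof.
  intros Hl. apply lifts_to_app in Hl as [m [Ha [t [Ht Et]]]].
  destruct t as [|d [|e bh]]; try discriminate.
  simpl in Et. injection Et as Ed Ee Eb.
  destruct Ht as [Hd [He Hb]].
  assert (e = rv d) as ->.
  { apply cd_inj_tl; [exact He|]. now rewrite (cov_rv _ _ p), Ed, Ee. }
  rewrite hd_rv, Hd in Hb.
  apply lifts_to_app. exists m. split; [exact Ha | now exists bh].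
Qed.

Lemma lifts_to_homotopic x y w w' c c1 :
  homotopic x y w w' -> is_walk x w y -> cv p c = x ->
  lifts_to c w c1 <-> lifts_to c w' c1.
Proof.
  intros H. induction H as [w w' Hs | w | w w' H IH | w1 w2 w3 H12 IH12 H23 IH23];
    intros Hw Hc.
  - destruct Hs as [_ [_ [a [b [f [-> ->]]]]]].
    split; [apply lifts_to_cancel_backtrack | intros Hl].
    rewrite <- Hc in Hw. destruct (lifts_to_exists _ _ _ Hw) as [c2 [Hl2 _]].
    replace c1 with c2; [exact Hl2|].
    apply (lifts_to_target_unique c (a ++ b)); [now apply (lifts_to_cancel_backtrack _ _ f) | exact Hl].
  - reflexivity.
  - symmetry. apply IH; [now apply (homotopic_is_walk _ _ _ _ H) | exact Hc].
  - rewrite IH12 by assumption.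
    apply IH23; [now apply (homotopic_is_walk _ _ _ _ H12) | exact Hc].
Qed.

Lemma lifts_to_conj_walk c0 c U W :
  lifts_to c0 (conj_walk U W) c0 -> lifts_to c0 U c -> lifts_to c W c.
Proof.
  intros Hl HU. apply lifts_to_app in Hl as [m1 [HU1 Hl]].
  apply lifts_to_app in Hl as [m2 [HW HU2]].
  apply lifts_to_rev_walk in HU2. rewrite rev_walk_involutive in HU2.
  assert (c = m1) by now apply lifts_to_target_unique with c0 U.
  assert (c = m2) by now apply lifts_to_target_unique with c0 U.
  now subst m1 m2.
Qed.

Definition short_closed_walks_lift (r : nat) : Prop :=
  forall y W yh, is_walk y W y -> length W <= r -> cv p yh = y -> lifts_to yh W yh.

Lemma char_subgroup_short_closed_walks_lift r x0 c0 :
  connected C -> cv p c0 = x0 -> char_subgroup_is_pi1r p c0 x0 r ->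
  short_closed_walks_lift r.
Proof.
  intros HC Hc0 Hchar y W yh HW Hr Hyh.
  destruct (HC c0 yh) as [Z HZ].
  assert (HU : is_walk x0 (map (cd p) Z) y)
    by (rewrite <- Hc0, <- Hyh; now apply is_walk_map_cd).
  assert (Hconj : is_walk x0 (conj_walk (map (cd p) Z) W) x0)
    by now apply is_walk_conj_walk with y.
  destruct (proj1 (Hchar _ Hconj) (in_pi1r_conj_short_closed_walk G r x0 W y _ HW HU Hr))
    as [Wh [HWh Hh]].
  apply lifts_to_conj_walk with c0 (map (cd p) Z); [|now exists Z].
  apply (lifts_to_homotopic _ _ _ _ c0 c0 Hh).
  - rewrite <- Hc0. now apply is_walk_map_cd.
  - exact Hc0.
  - now exists Wh.
Qed.

End Coverings.

Section Balls.
Context {C G : graph} (p : covering C G) (r : nat).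
Hypothesis short_lift : short_closed_walks_lift p r.

Lemma cv_inj_short_walk_ends vh x y a b :
  is_walk vh a x -> is_walk vh b y -> length a + length b <= r ->
  cv p x = cv p y -> x = y.
Proof.
  intros Ha Hb Hab E.
  assert (HW : is_walk (cv p vh) (map (cd p) a ++ rev_walk (map (cd p) b)) (cv p vh)).
  { apply is_walk_app. exists (cv p x). split; [now apply is_walk_map_cd|].
    rewrite E. apply is_walk_rev_walk. now apply is_walk_map_cd. }
  assert (Hl : lifts_to p vh (map (cd p) a ++ rev_walk (map (cd p) b)) vh).
  { apply (short_lift _ _ vh HW); [|reflexivity].
    rewrite length_app, length_rev_walk, !length_map. lia. }
  apply lifts_to_app in Hl as [m [La Lb]].
  apply lifts_to_rev_walk in Lb. rewrite rev_walk_involutive in Lb.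
  assert (x = m) by (apply (lifts_to_target_unique p vh (map (cd p) a)); [now exists a | exact La]).
  assert (y = m) by (apply (lifts_to_target_unique p vh (map (cd p) b)); [now exists b | exact Lb]).
  congruence.
Qed.

Lemma ball_vert_map vh x : ball_vert vh r x -> ball_vert (cv p vh) r (cv p x).
Proof.
  intros [w [Hw Hl]]. exists (map (cd p) w). split.
  - now apply is_walk_map_cd.
  - now rewrite length_map.
Qed.

Lemma ball_vert_inj vh x y :
  ball_vert vh r x -> ball_vert vh r y -> cv p x = cv p y -> x = y.
Proof.
  intros [a [Ha La]] [b [Hb Lb]]. apply cv_inj_short_walk_ends with vh a b; auto. lia.
Qed.

Lemma ball_vert_surj vh y : ball_vert (cv p vh) r y -> exists x, ball_vert vh r x /\ cv p x = y.
Proof.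
  intros [w [Hw Hl]]. destruct (lifts_to_exists p vh w y Hw) as [x [[wh [Hwh <-]] Hx]].
  exists x. split; [|exact Hx]. exists wh. split; [exact Hwh|]. now rewrite length_map in Hl.
Qed.

Lemma ball_dart_map vh d : ball_dart vh r d -> ball_dart (cv p vh) r (cd p d).
Proof.
  intros [a [b [Ha [Hb L]]]]. exists (map (cd p) a), (map (cd p) b). split; [|split].
  - rewrite (cov_tl _ _ p). now apply is_walk_map_cd.
  - rewrite cd_hd. now apply is_walk_map_cd.
  - now rewrite !length_map.
Qed.

(* Either the two tails or the two heads are joined through vh by a walk of
   length at most r. *)
Lemma ball_dart_inj vh d e :
  ball_dart vh r d -> ball_dart vh r e -> cd p d = cd p e -> d = e.
Proof.
  intros [a [b [Ha [Hb L]]]] [a' [b' [Ha' [Hb' L']]]] E.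
  destruct (le_lt_dec (length a + length a') r) as [Hl | Hl].
  - apply (cd_inj_tl p); [|exact E].
    apply cv_inj_short_walk_ends with vh a a'; auto.
    now rewrite <- !(cov_tl _ _ p), E.
  - assert (Hhd : hd d = hd e).
    { apply cv_inj_short_walk_ends with vh (rev_walk b) (rev_walk b');
        [now apply is_walk_rev_walk | now apply is_walk_rev_walk | |].
      - rewrite !length_rev_walk. lia.
      - now rewrite <- !cd_hd, E. }
    rewrite <- (rv_invol _ d), <- (rv_invol _ e). f_equal.
    apply (cd_inj_tl p); [exact Hhd|]. now rewrite !(cov_rv _ _ p), E.
Qed.

Lemma ball_dart_surj vh f :
  ball_dart (cv p vh) r f -> exists d, ball_dart vh r d /\ cd p d = f.
Proof.
  intros [a [b [Ha [Hb L]]]].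
  assert (HW : is_walk (cv p vh) (a ++ f :: b) (cv p vh))
    by (apply is_walk_app; exists (tl f); now split).
  destruct (lifts_to_exists p vh a _ Ha) as [c [[ah [Hah Ea]] Hc]].
  destruct (cov_local _ _ p c f) as [d [[Hd Ed] _]]; [now rewrite Hc|].
  rewrite <- Ed, cd_hd in Hb.
  destruct (lifts_to_exists p (hd d) b _ Hb) as [c' [[bh [Hbh Eb]] _]].
  assert (Hlift : lifts_to p vh (a ++ f :: b) c').
  { exists (ah ++ d :: bh). split.
    - apply is_walk_app. exists c. split; [exact Hah | now split].
    - rewrite map_app. simpl. congruence. }
  assert (c' = vh) as ->.
  { apply (lifts_to_target_unique p vh (a ++ f :: b)); [exact Hlift|].
    apply (short_lift _ _ vh HW); [|reflexivity]. rewrite length_app. simpl. lia. }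
  exists d. split; [|exact Ed].
  exists ah, bh. split; [now rewrite Hd | split; [exact Hbh|]].
  rewrite <- Ea, <- Eb, !length_map in L. exact L.
Qed.

Lemma short_closed_walks_lift_preserves_balls : preserves_balls p r.
Proof.
  intros v vh <-. repeat split.
  - apply ball_vert_map.
  - apply ball_vert_inj.
  - apply ball_vert_surj.
  - apply ball_dart_map.
  - apply ball_dart_inj.
  - apply ball_dart_surj.
Qed.

End Balls.

Theorem lemma4p3 (G C : graph) (r : nat) (x0 : vert G) (p : covering C G) (c0 : vert C) :
  connected G -> connected C -> cv p c0 = x0 ->
  char_subgroup_is_pi1r p c0 x0 r ->
  preserves_balls p r.
Proof.
  intros _ HC Hc0 Hchar.
  apply short_closed_walks_lift_preserves_balls.
  now apply char_subgroup_short_closed_walks_lift with x0 c0.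
Qed.
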